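(* Let $p\ge1$. Assume Assumption A1(p) and Assumption A2 (see context), and let $0<\eta_s\le\eta_{\infty,p}$ for all $s$. Then for every $t\ge1$, \[\mathbb E^{1/p}\big[\|\tilde\theta^{(\mathrm{tr})}_t\|^p\big]\le\exp\Big(-a\sum_{s=1}^t\eta_sH_s\Big)\|\theta_0-\theta_\star\|,\qquad\tilde\theta^{(\mathrm{tr})}_t=\prod_{s=1}^t\Gamma^{\mathrm{avg}}_s(\theta_0-\theta_\star).\]
   Context: Setting: $N$ agents, dimension $d$. For each agent $c$: distribution $\pi_c$ on $(\mathsf Z,\mathcal Z)$, measurable $\mathbf A^c:\mathsf Z\to\mathbb R^{d\times d}$, $\mathbf b^c:\mathsf Z\to\mathbb R^d$, $\bar{\mathbf A}^c=\mathbb E_{\pi_c}[\mathbf A^c(Z)]$, $\bar{\mathbf b}^c=\mathbb E_{\pi_c}[\mathbf b^c(Z)]$; $\theta_\star$ solves $(N^{-1}\sum_c\bar{\mathbf A}^c)\theta_\star=N^{-1}\sum_c\bar{\mathbf b}^c$; $\bar{\mathbf A}^c\theta^c_\star=\bar{\mathbf b}^c$; $\varepsilon^c(z)=(\mathbf A^c(z)-\bar{\mathbf A}^c)\theta^c_\star-(\mathbf b^c(z)-\bar{\mathbf b}^c)$. Assumption A1(p): each $-\bar{\mathbf A}^c$ Hurwitz; there exist $a>0,\eta_{\infty,p}>0$, $\eta_{\infty,p}a\le1/2$, with $\mathbb E^{1/p}_{Z\sim\pi_c}[\|(I-\eta\mathbf A^c(Z))u\|^p]\le(1-\eta a)\|u\|$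 for all $0<\eta<\eta_{\infty,p}$, $u$. Assumption A2: samples $Z^c_{s,h}$ ($1\le h\le H_s$) independent with $Z^c_{s,h}\sim\pi_c$; $\max_c\sup_z\|\varepsilon^c(z)\|<\infty$, $\max_c\sup_z\max(\|\mathbf A^c(z)\|,\|\mathbf A^c(z)-\bar{\mathbf A}^c\|)<\infty$. $H_s\in\mathbb N$; $\Gamma^c_s=(I-\eta_s\mathbf A^c(Z^c_{s,H_s}))\cdots(I-\eta_s\mathbf A^c(Z^c_{s,1}))$, $\Gamma^{\mathrm{avg}}_s=N^{-1}\sum_c\Gamma^c_s$, $\prod_{s=1}^t\Gamma^{\mathrm{avg}}_s=\Gamma^{\mathrm{avg}}_t\cdots\Gamma^{\mathrm{avg}}_1$; $\theta_0\in\mathbb R^d$ fixed. *)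

From HB Require Import structures.
From mathcomp Require Import all_boot all_order all_algebra.
From mathcomp Require Import all_classical all_reals all_analysis.
From mathcomp Require Import complex.
Set Implicit Arguments. Unset Strict Implicit. Unset Printing Implicit Defensive.
Import Order.TTheory GRing.Theory Num.Theory.
Local Open Scope ring_scope.

Definition enorm (R : realType) (d : nat) (v : 'cV[R]_d) : R :=
  Num.sqrt (\sum_(i < d) v i ord0 ^+ 2).

Definition hurwitz (R : realType) (d : nat) (M : 'M[R]_d) : Prop :=
  forall lam : R[i], root (char_poly (map_mx (fun x : R => (x%:C)%C) M)) lam ->
    complex.Re lam < 0.

(* Ordered left product:  lprod n F = F n *m F (n-1) *m ... *m F 1
   (identity when n = 0). *)
Fixpoint lprod (R : pzRingType) (d : nat) (n : nat) (F : nat -> 'M[R]_d) : 'M[R]_d :=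
  match n with
  | 0 => 1%:M
  | k.+1 => F k.+1 *m lprod k F
  end.

Definition mutually_independent (R : realType) (dO : measure_display)
  (Omega : measurableType dO) (P : probability Omega R)
  (I : eqType) (D : I -> Prop) (dZ : measure_display) (TZ : measurableType dZ)
  (X : I -> Omega -> TZ) : Prop :=
  forall (F : seq I), uniq F -> (forall i, i \in F -> D i) ->
  forall (B : I -> set TZ), (forall i, measurable (B i)) ->
    (P (\big[setI/setT]_(i <- F) (X i @^-1` B i))%classic
    = \prod_(i <- F) P (X i @^-1` B i)%classic)%E.

Definition Gamma_c (R : realType) (d N : nat) (TZ : Type) (Omega : Type)
  (A : 'I_N -> TZ -> 'M[R]_d) (eta : nat -> R) (H : nat -> nat)
  (Z : 'I_N -> nat -> nat -> Omega -> TZ) (c : 'I_N) (s : nat) (w : Omega) : 'M[R]_d :=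
  lprod (H s) (fun h => 1%:M - eta s *: A c (Z c s h w)).

Definition Gamma_avg (R : realType) (d N : nat) (TZ : Type) (Omega : Type)
  (A : 'I_N -> TZ -> 'M[R]_d) (eta : nat -> R) (H : nat -> nat)
  (Z : 'I_N -> nat -> nat -> Omega -> TZ) (s : nat) (w : Omega) : 'M[R]_d :=
  (N%:R)^-1 *: \sum_(c < N) Gamma_c A eta H Z c s w.

Definition Abar (R : realType) (dZ : measure_display) (TZ : measurableType dZ)
  (d : nat) (mu : measure TZ R) (A : TZ -> 'M[R]_d) : 'M[R]_d :=
  \matrix_(i, j) Rintegral mu setT (fun z => A z i j).
Definition bbar (R : realType) (dZ : measure_display) (TZ : measurableType dZ)
  (d : nat) (mu : measure TZ R) (b : TZ -> 'cV[R]_d) : 'cV[R]_d :=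
  \col_i Rintegral mu setT (fun z => b z i ord0).

(* In round s every client c multiplies the current vector by H_s factors
   I - eta_s A^c(Z), each built from a fresh sample that is independent of all
   the samples drawn before it.  Integrating the new sample out first (Fubini
   against its law times P restricted to the sigma-algebra of the earlier
   samples, which is the joint law by a pi-lambda argument), A1(p) shows that
   each factor shrinks the L^p norm by 1 - eta_s a.  Minkowski's inequality
   over the N clients then bounds one round by (1 - eta_s a)^H_s, and
   1 - x <= exp (- x) gives the claim. *)

From HB Require Import structures.
From mathcomp Require Import all_boot all_order all_algebra.
From mathcomp Require Import all_classical all_reals all_analysis.
From mathcomp Require Import complex.
From mathcomp Require Import measurable_realfun ring lra.
Set Implicit Arguments. Unset Strict Implicit. Unset Printing Implicit Defensive.
Import Order.TTheory GRing.Theory Num.Theory.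
Local Open Scope classical_set_scope.
Local Open Scope ring_scope.

Section enorm.
Context {R : realType} {d : nat}.
Implicit Types (u v : 'cV[R]_d).

Lemma enorm_ge0 u : 0 <= enorm u.
Proof. exact: sqrtr_ge0. Qed.

Lemma enorm_sqr u : enorm u ^+ 2 = \sum_(i < d) u i ord0 ^+ 2.
Proof. by rewrite /enorm sqr_sqrtr // sumr_ge0 // => i _; rewrite sqr_ge0. Qed.

(* Lagrange's identity: twice the Cauchy-Schwarz defect is a sum of squares. *)
Lemma cauchy_schwarz (x y : 'I_d -> R) :
  (\sum_i x i * y i) ^+ 2 <= (\sum_i x i ^+ 2) * (\sum_i y i ^+ 2).
Proof.
have lagrange : ((\sum_i x i ^+ 2) * (\sum_i y i ^+ 2) - (\sum_i x i * y i) ^+ 2) *+ 2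
    = \sum_i \sum_j (x i * y j - x j * y i) ^+ 2.
  have expand : \sum_i \sum_j (x i * y j - x j * y i) ^+ 2 =
      \sum_i \sum_j (x i ^+ 2 * y j ^+ 2) + \sum_i \sum_j (x j ^+ 2 * y i ^+ 2)
      - (\sum_i \sum_j (x i * y i * (x j * y j))) *+ 2.
    rewrite -sumrMnl -big_split -sumrB /=; apply: eq_bigr => i _.
    rewrite -sumrMnl -big_split -sumrB /=; apply: eq_bigr => j _.
    by rewrite sqrrB !exprMn; ring.
  have mul_sums (f g : 'I_d -> R) :
      (\sum_i f i) * (\sum_j g j) = \sum_i \sum_j f i * g j.
    by rewrite mulr_suml; apply: eq_bigr => i _; rewrite mulr_sumr.
  rewrite expand expr2 !mul_sums.
  rewrite [\sum_i \sum_j (x j ^+ 2 * y i ^+ 2)]exchange_big /=.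
  by rewrite mulrnBl mulr2n.
rewrite -subr_ge0 -(pmulrn_lge0 _ (isT : (0 < 2)%N)) lagrange.
by apply: sumr_ge0 => i _; apply: sumr_ge0 => j _; exact: sqr_ge0.
Qed.

Lemma enormD u v : enorm (u + v) <= enorm u + enorm v.
Proof.
rewrite -(@ler_pXn2r _ 2) ?nnegrE ?addr_ge0 ?enorm_ge0 //.
rewrite sqrrD !enorm_sqr.
have -> : \sum_(i < d) (u + v) i ord0 ^+ 2 =
    \sum_(i < d) u i ord0 ^+ 2 + (\sum_(i < d) u i ord0 * v i ord0) *+ 2
    + \sum_(i < d) v i ord0 ^+ 2.
  by rewrite -sumrMnl -!big_split /=; apply: eq_bigr => i _; rewrite !mxE sqrrD.
rewrite lerD2r lerD2l lerMn2r /=.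
apply: le_trans (ler_norm _) _.
rewrite -(@ler_pXn2r _ 2) ?nnegrE ?mulr_ge0 ?enorm_ge0 //.
by rewrite real_normK ?num_real // exprMn !enorm_sqr cauchy_schwarz.
Qed.

Lemma enormZ k u : enorm (k *: u) = `|k| * enorm u.
Proof.
rewrite /enorm; under eq_bigr do rewrite mxE exprMn.
by rewrite -mulr_sumr sqrtrM ?sqr_ge0 // sqrtr_sqr.
Qed.

Lemma enormB u v : enorm (u - v) <= enorm u + enorm v.
Proof. by rewrite -(mul1r (enorm v)) -(normrN1 R) -enormZ scaleN1r enormD. Qed.

Lemma enorm_sum (I : Type) (r : seq I) (P : pred I) (F : I -> 'cV[R]_d) :
  enorm (\sum_(i <- r | P i) F i) <= \sum_(i <- r | P i) enorm (F i).
Proof.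
elim/big_rec2: _ => [|i y1 y2 _ IH].
  by rewrite -(scale0r (0 : 'cV[R]_d)) enormZ normr0 mul0r.
by apply: le_trans (enormD _ _) _; rewrite lerD2l.
Qed.

End enorm.

Definition mx_measurable {R : realType} {dT : measure_display} {T : measurableType dT}
    {m n} (M : T -> 'M[R]_(m, n)) :=
  forall i j, measurable_fun setT (fun x => M x i j).

Section mx_measurable.
Context {R : realType} {dT : measure_display} {T : measurableType dT}.

Lemma mx_measurable_cst m n (M : 'M[R]_(m, n)) : mx_measurable (fun _ : T => M).
Proof. by move=> i j; exact: measurable_cst. Qed.

Lemma mx_measurable_comp {dT' : measure_display} {T' : measurableType dT'}
    m n (f : T -> T') (M : T' -> 'M[R]_(m, n)) :
  measurable_fun setT f -> mx_measurable M -> mx_measurable (M \o f).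
Proof. by move=> mf mM i j; exact: measurableT_comp (mM i j) mf. Qed.

Lemma mx_measurableD m n (M1 M2 : T -> 'M[R]_(m, n)) :
  mx_measurable M1 -> mx_measurable M2 -> mx_measurable (fun x => M1 x + M2 x).
Proof.
move=> m1 m2 i j; under eq_fun do rewrite mxE.
exact: measurable_funD.
Qed.

Lemma mx_measurableZ m n (k : T -> R) (M : T -> 'M[R]_(m, n)) :
  measurable_fun setT k -> mx_measurable M -> mx_measurable (fun x => k x *: M x).
Proof.
move=> mk mM i j; under eq_fun do rewrite mxE.
exact: measurable_funM.
Qed.

Lemma mx_measurableB m n (M1 M2 : T -> 'M[R]_(m, n)) :
  mx_measurable M1 -> mx_measurable M2 -> mx_measurable (fun x => M1 x - M2 x).
Proof.
move=> m1 m2; apply: mx_measurableD => // i j.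
under eq_fun do rewrite -scaleN1r.
exact: mx_measurableZ (measurable_cst _) m2 i j.
Qed.

Lemma mx_measurableM m n l (M1 : T -> 'M[R]_(m, n)) (M2 : T -> 'M[R]_(n, l)) :
  mx_measurable M1 -> mx_measurable M2 -> mx_measurable (fun x => M1 x *m M2 x).
Proof.
move=> m1 m2 i j; under eq_fun do rewrite mxE.
by apply: measurable_sum => k; exact: measurable_funM.
Qed.

Lemma mx_measurable_sum m n (I : Type) (r : seq I) (F : I -> T -> 'M[R]_(m, n)) :
  (forall i, mx_measurable (F i)) -> mx_measurable (fun x => \sum_(i <- r) F i x).
Proof.
move=> mF i j; under eq_fun do rewrite summxE.
by apply: measurable_sum => k; exact: mF.
Qed.

Lemma mx_measurable_lprod d n (F : nat -> T -> 'M[R]_d) :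
  (forall k, (1 <= k <= n)%N -> mx_measurable (F k)) ->
  mx_measurable (fun x => lprod n (fun k => F k x)).
Proof.
elim: n => [|n IH] mF /=; first exact: mx_measurable_cst.
apply: mx_measurableM; first by apply: mF; rewrite leqnn.
by apply: IH => k /andP[k1 kn]; apply: mF; rewrite k1 ltnW.
Qed.

Lemma measurable_enorm d (v : T -> 'cV[R]_d) :
  mx_measurable v -> measurable_fun setT (fun x => enorm (v x)).
Proof.
move=> mv; apply: measurableT_comp (continuous_measurable_fun (@sqrt_continuous R)) _.
by apply: measurable_sum => i; apply: measurable_funX; exact: mv.
Qed.

End mx_measurable.

Lemma powRK {R : realType} (p k : R) : p != 0 -> 0 <= k -> (k `^ p) `^ p^-1 = k.
Proof. by move=> p0 k0; rewrite -powRrM mulfV // powRr1. Qed.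

Definition Lpnorm {R : realType} {dT : measure_display} {T : measurableType dT}
    (mu : {measure set T -> \bar R}) (p : R) (f : T -> R) : \bar R :=
  ((\int[mu]_x ((f x) `^ p)%:E) `^ p^-1)%E.

Section Lpnorm.
Context {R : realType} {dT : measure_display} {T : measurableType dT}.
Variables (mu : {measure set T -> \bar R}) (p : R).
Hypothesis p1 : 1 <= p.
Implicit Types (f g : T -> R).

Let p0 : 0 < p. Proof. exact: lt_le_trans p1. Qed.

Lemma integral_powR_ge0 f : (0 <= \int[mu]_x ((f x) `^ p)%:E)%E.
Proof. by apply: integral_ge0 => x _; rewrite lee_fin powR_ge0. Qed.

Lemma measurable_powR_EFin f : measurable_fun setT f ->
  measurable_fun setT (fun x => ((f x) `^ p)%:E).
Proof. by move=> mf; apply/measurable_EFinP; exact: measurableT_comp (measurable_powR p) mf. Qed.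

Lemma LpnormE f : (forall x, 0 <= f x) -> Lpnorm mu p f = ('N[mu]_p%:E[EFin \o f])%E.
Proof.
move=> f0; rewrite unlock /Lpnorm; congr (_ `^ _)%E; apply: eq_integral => x _.
by rewrite /= ger0_norm // poweR_EFin.
Qed.

Lemma Lpnorm_le f g : measurable_fun setT f -> measurable_fun setT g ->
  (forall x, 0 <= f x <= g x) -> (Lpnorm mu p f <= Lpnorm mu p g)%E.
Proof.
move=> mf mg fg; apply: gt0_ler_poweR.
- by rewrite invr_ge0 ltW.
- by rewrite in_itv /= integral_powR_ge0 leey.
- by rewrite in_itv /= integral_powR_ge0 leey.
apply: ge0_le_integral => //.
- by move=> x _; rewrite lee_fin powR_ge0.
- exact: measurable_powR_EFin.
- exact: measurable_powR_EFin.
move=> x _; have /andP[f0 fgx] := fg x; rewrite lee_fin.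
by apply: ge0_ler_powR; rewrite ?nnegrE ?(ltW p0) // (le_trans f0 fgx).
Qed.

Lemma Lpnorm_D f g : measurable_fun setT f -> measurable_fun setT g ->
  (forall x, 0 <= f x) -> (forall x, 0 <= g x) ->
  (Lpnorm mu p (fun x => (f x + g x)%R) <= Lpnorm mu p f + Lpnorm mu p g)%E.
Proof.
move=> mf mg f0 g0; have fg0 x : 0 <= f x + g x by rewrite addr_ge0.
by rewrite !LpnormE //; exact: minkowski_EFin.
Qed.

Lemma Lpnorm_Z k f : 0 <= k -> measurable_fun setT f -> (forall x, 0 <= f x) ->
  Lpnorm mu p (fun x => (k * f x)%R) = (k%:E * Lpnorm mu p f)%E.
Proof.
move=> k0 mf f0; rewrite /Lpnorm.
under eq_integral => x _ do rewrite powRM // EFinM.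
rewrite ge0_integralZl_EFin ?powR_ge0 //; last first.
  - exact: measurable_powR_EFin.
  - by move=> x _; rewrite lee_fin powR_ge0.
by rewrite poweRM ?integral_powR_ge0 ?lee_fin ?powR_ge0 // poweR_EFin powRK ?gt_eqF.
Qed.

Lemma Lpnorm_sum (I : Type) (r : seq I) (F : I -> T -> R) :
  (forall i, measurable_fun setT (F i)) -> (forall i x, 0 <= F i x) ->
  (Lpnorm mu p (fun x => (\sum_(i <- r) F i x)%R) <= \sum_(i <- r) Lpnorm mu p (F i))%E.
Proof.
move=> mF F0; elim: r => [|i r IH].
  under eq_fun do rewrite big_nil.
  by rewrite big_nil LpnormE // Lnorm0 // eqe gt_eqF.
under eq_fun do rewrite big_cons.
rewrite big_cons; apply: le_trans (Lpnorm_D (mF i) (measurable_sum r mF) _ _) _.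
- exact: F0.
- by move=> x; apply: sumr_ge0.
- by rewrite leeD2l.
Qed.

Lemma Lpnorm_le_EFin f b : 0 <= b ->
  (Lpnorm mu p f <= b%:E)%E <-> (\int[mu]_x ((f x) `^ p)%:E <= (b `^ p)%:E)%E.
Proof.
move=> b0; have int_ge0 := integral_powR_ge0 f.
split => h.
- rewrite -[X in (X <= _)%E]poweRe1 // -(@mulVf _ p) ?gt_eqF // poweRrM -poweR_EFin.
  apply: gt0_ler_poweR; rewrite ?in_itv /= ?poweR_ge0 ?lee_fin ?leey ?andbT //.
  exact: ltW.
- have -> : b%:E = ((b `^ p)%:E `^ p^-1)%E by rewrite poweR_EFin powRK ?gt_eqF.
  apply: gt0_ler_poweR; rewrite ?in_itv /= ?lee_fin ?powR_ge0 ?leey ?invr_ge0 ?andbT //.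
  exact: ltW.
Qed.

Lemma Lpnorm_le_scale f g b : 0 <= b ->
  (\int[mu]_x ((f x) `^ p)%:E <= (b `^ p)%:E * \int[mu]_x ((g x) `^ p)%:E)%E ->
  (Lpnorm mu p f <= b%:E * Lpnorm mu p g)%E.
Proof.
move=> b0 fg; apply: le_trans (gt0_ler_poweR _ _ _ fg) _.
- by rewrite invr_ge0 ltW.
- by rewrite in_itv /= integral_powR_ge0 leey.
- by rewrite in_itv /= mule_ge0 ?lee_fin ?powR_ge0 ?integral_powR_ge0 ?leey.
by rewrite poweRM ?lee_fin ?powR_ge0 ?integral_powR_ge0 // poweR_EFin powRK ?gt_eqF.
Qed.

End Lpnorm.

Lemma Lpnorm_cst {R : realType} {dT : measure_display} {T : measurableType dT}
    (P : probability T R) (p : R) (k : R) :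
  0 < p -> 0 <= k -> Lpnorm P p (fun _ => k) = k%:E.
Proof.
move=> p0 k0; rewrite /Lpnorm integral_cst //.
rewrite [X in (_ * X)%E](_ : _ = 1%E); last exact: probability_setT.
by rewrite mule1 poweR_EFin powRK ?gt_eqF.
Qed.

Section independence.
Context {R : realType} {dO : measure_display} {Om : measurableType dO}.
Context {dZ : measure_display} {TZ : measurableType dZ}.
Variables (P : probability Om R) (mu : probability TZ R) (X : Om -> TZ).
Variable G : set (set Om).
Hypotheses (mX : measurable_fun setT X) (GI : setI_closed G) (GT : G setT)
  (Gm : forall E, G E -> measurable E).
Hypothesis X_indep : forall B E, measurable B -> G E ->
  P (X @^-1` B `&` E) = (mu B * P E)%E.

Local Notation OmG := (g_sigma_algebraType G).

Lemma measurable_g_sigma (E : set Om) : <<s G >> E -> measurable E.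
Proof.
by apply: smallest_sub; [exact: sigma_algebra_measurable | move=> E' /Gm].
Qed.

Lemma measurable_id_g_sigma : measurable_fun setT (id : Om -> OmG).
Proof. by move=> _ B mB; rewrite setTI; exact: measurable_g_sigma. Qed.

Lemma indep_g_sigma (B : set TZ) (E : set OmG) : measurable B -> <<s G >> E ->
  P (X @^-1` B `&` E) = (mu B * P E)%E.
Proof.
move=> mB; have mXB : measurable (X @^-1` B) by rewrite -[X in measurable X]setTI; exact: mX.
have muB_fin : mu B \is a fin_num by exact: fin_num_measure.
apply: (@dynkin_induction _ OmG G (fun E => P (X @^-1` B `&` E) = (mu B * P E)%E)) => //.
- exact: X_indep.
- by move=> E' GE'; exact: X_indep.
- move=> S /measurable_g_sigma mS XS.
  have PXB : P (X @^-1` B) = mu B.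
    by rewrite -[X @^-1` B]setIT X_indep // probability_setT mule1.
  rewrite -setDE measureD //; last first.
    by rewrite (le_lt_trans (probability_le1 _ mXB)) ?ltry.
  rewrite -[LHS]/(P (X @^-1` B) - P (X @^-1` B `&` S))%E PXB XS probability_setC //.
  by rewrite muleBr ?mule1.
- move=> F mF tF XF; have {}mF n : measurable (F n : set Om).
    exact: measurable_g_sigma (mF n).
  rewrite setI_bigcupr !measure_bigcup //; last 2 first.
  + by move=> n _; exact: measurableI.
  + exact: trivIset_setIl.
  rewrite -(fineK muB_fin) -nneseriesZl; last by move=> n _; exact: measure_ge0.
  by apply: eq_eseriesr => n _; rewrite fineK //; exact: XF.
Qed.

Let pair_meas : measurable_fun setT (fun w : Om => (X w, (w : OmG))).
Proof. exact: measurable_fun_pair mX measurable_id_g_sigma. Qed.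

Let id_mfun : {mfun Om >-> OmG} :=
  HB.pack (id : Om -> OmG) (isMeasurableFun.Build _ _ _ _ _ measurable_id_g_sigma).
Let pair_mfun : {mfun Om >-> (TZ * OmG)%type} :=
  HB.pack (fun w : Om => (X w, (w : OmG))) (isMeasurableFun.Build _ _ _ _ _ pair_meas).

(* The law of w |-> (X w, w) on TZ x sigma(G) is the product of the laws of X
   and of the trace of P on sigma(G): both agree on rectangles. *)
Lemma integral_indep (f : (TZ * OmG)%type -> \bar R) : measurable_fun setT f ->
  (forall x, 0 <= f x)%E ->
  (\int[P]_w f (X w, (w : OmG)) = \int[P]_w \int[mu]_z f (z, (w : OmG)))%E.
Proof.
move=> mf f0.
have -> : (\int[P]_w f (X w, (w : OmG)) = \int[distribution P pair_mfun]_y f y)%E.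
  by rewrite ge0_integral_distribution.
rewrite (eq_measure_integral (mu \x distribution P id_mfun)%E); last first.
  move=> B mB _; apply/esym; apply: product_measure_unique => // A E mA mE.
  exact: indep_g_sigma mA mE.
rewrite fubini_tonelli2 // ge0_integral_distribution //.
- exact: measurable_fun_fubini_tonelli_G.
- by move=> y; apply: integral_ge0 => z _; exact: f0.
Qed.

End independence.

Definition Lp_contraction {R : realType} {dZ : measure_display} {TZ : measurableType dZ}
    {d : nat} (mu : {measure set TZ -> \bar R}) (A : TZ -> 'M[R]_d) (p a eta : R) :=
  forall u : 'cV[R]_d,
  (Lpnorm mu p (fun z => enorm ((1%:M - eta *: A z) *m u)) <= ((1 - eta * a) * enorm u)%:E)%E.

Section contraction.
Context {R : realType} {dZ : measure_display} {TZ : measurableType dZ} {d : nat}.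
Variables (mu : probability TZ R) (A : TZ -> 'M[R]_d) (p a : R).
Hypotheses (mA : mx_measurable A) (p1 : 1 <= p).

Lemma mx_measurable_step (eta : R) : mx_measurable (fun z => 1%:M - eta *: A z).
Proof.
apply: mx_measurableB; first exact: mx_measurable_cst.
exact: mx_measurableZ (measurable_cst _) mA.
Qed.

Lemma enorm_step_le (M eta eta' : R) (u : 'cV[R]_d) (z : TZ) :
  (forall v, enorm (A z *m v) <= M * enorm v) -> eta <= eta' ->
  enorm ((1%:M - eta' *: A z) *m u)
    <= enorm ((1%:M - eta *: A z) *m u) + (eta' - eta) * `|M| * enorm u.
Proof.
move=> AM le_eta; have -> : (1%:M - eta' *: A z) *m u =
    (1%:M - eta *: A z) *m u - (eta' - eta) *: (A z *m u).
  by rewrite !mulmxBl -!scalemxAl scalerBl opprB addrA subrK.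
apply: le_trans (enormB _ _) _; rewrite lerD2l enormZ ger0_norm ?subr_ge0 //.
rewrite -mulrA ler_wpM2l ?subr_ge0 //; apply: le_trans (AM u) _.
by rewrite ler_wpM2r ?enorm_ge0 ?ler_norm.
Qed.

Lemma Lpnorm_step_le (M eta eta' : R) (u : 'cV[R]_d) :
  (forall z v, enorm (A z *m v) <= M * enorm v) -> eta <= eta' ->
  (Lpnorm mu p (fun z => enorm ((1%:M - eta' *: A z) *m u))
    <= Lpnorm mu p (fun z => enorm ((1%:M - eta *: A z) *m u))
       + ((eta' - eta) * `|M| * enorm u)%:E)%E.
Proof.
move=> AM le_eta; have c0 : 0 <= (eta' - eta) * `|M| * enorm u.
  by rewrite !mulr_ge0 ?subr_ge0 ?enorm_ge0.
have m_step e :=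
  measurable_enorm (mx_measurableM (mx_measurable_step e) (mx_measurable_cst u)).
rewrite -(Lpnorm_cst mu (lt_le_trans ltr01 p1) c0).
apply: le_trans (Lpnorm_D mu p1 (m_step eta) (measurable_cst _) (fun _ => enorm_ge0 _)
  (fun _ => c0)).
apply: (Lpnorm_le mu p1 (m_step eta')) => [|z].
  exact: measurable_funD (m_step eta) (measurable_cst _).
by rewrite enorm_ge0 enorm_step_le.
Qed.

(* A1 is only assumed on the open interval (0, eta_inf); for a bounded A the
   contraction bound passes to eta_inf, which the step sizes may reach. *)
Lemma Lp_contraction_closed (M eta_inf : R) :
  (forall z v, enorm (A z *m v) <= M * enorm v) ->
  (forall eta, 0 < eta < eta_inf -> Lp_contraction mu A p a eta) ->
  forall eta, 0 < eta <= eta_inf -> Lp_contraction mu A p a eta.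
Proof.
move=> AM A1 eta /andP[eta0]; rewrite le_eqVlt => /predU1P[eta_infE | lt_eta];
  last by apply: A1; rewrite eta0.
subst eta => u; apply/lee_addgt0Pr => e e0.
pose K := (`|a| + `|M|) * enorm u + 1.
have K0 : 0 < K by rewrite ltr_pwDr ?mulr_ge0 ?addr_ge0 ?enorm_ge0.
pose del := Num.min (eta_inf / 2) (e / K).
have del0 : 0 < del by rewrite lt_min !divr_gt0.
have del_eta : del <= eta_inf / 2 by rewrite ge_min lexx.
have del_e : del * K <= e by rewrite -ler_pdivlMr // ge_min lexx orbT.
pose eta1 := eta_inf - del.
have eta1_in : 0 < eta1 < eta_inf by apply/andP; split; rewrite /eta1; lra.
have le_eta1 : eta1 <= eta_inf by rewrite /eta1; lra.
apply: le_trans (Lpnorm_step_le u AM le_eta1) _.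
apply: le_trans (leeD (A1 _ eta1_in u) (lexx _)) _.
rewrite -!EFinD lee_fin.
have -> : (1 - eta1 * a) * enorm u + (eta_inf - eta1) * `|M| * enorm u
    = (1 - eta_inf * a) * enorm u + del * ((a + `|M|) * enorm u).
  by rewrite /eta1; ring.
rewrite lerD2l (le_trans _ del_e) // ler_wpM2l ?(ltW del0) //.
by apply: ler_wpDr => //; rewrite ler_wpM2r ?enorm_ge0 // lerD2r ler_norm.
Qed.

End contraction.

Section independent_step.
Context {R : realType} {dO : measure_display} {Om : measurableType dO}.
Context {dZ : measure_display} {TZ : measurableType dZ} {d : nat}.
Variables (P : probability Om R) (mu : probability TZ R) (A : TZ -> 'M[R]_d).
Variables (p a eta : R) (X : Om -> TZ) (G : set (set Om)).
Hypotheses (mA : mx_measurable A) (p1 : 1 <= p).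
Hypotheses (contr : Lp_contraction mu A p a eta) (rate0 : 0 <= 1 - eta * a).
Hypotheses (mX : measurable_fun setT X) (GI : setI_closed G) (GT : G setT)
  (Gm : forall E, G E -> measurable E).
Hypothesis X_indep : forall B E, measurable B -> G E ->
  P (X @^-1` B `&` E) = (mu B * P E)%E.

Local Notation OmG := (g_sigma_algebraType G).

Lemma integral_indep_step (W : OmG -> 'cV[R]_d) : mx_measurable W ->
  (\int[P]_w ((enorm ((1%:M - eta *: A (X w)) *m W w)) `^ p)%:E
    <= ((1 - eta * a) `^ p)%:E * \int[P]_w ((enorm (W w)) `^ p)%:E)%E.
Proof.
move=> mW; pose phi (x : TZ * OmG) := ((enorm ((1%:M - eta *: A x.1) *m W x.2)) `^ p)%:E.
have phi0 x : (0 <= phi x)%E by rewrite lee_fin powR_ge0.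
have mphi : measurable_fun setT phi.
  apply: measurable_powR_EFin; apply: measurable_enorm; apply: mx_measurableM.
    exact: mx_measurable_comp measurable_fst (mx_measurable_step mA eta).
  exact: mx_measurable_comp measurable_snd mW.
have m_normW : measurable_fun setT (fun w : Om => enorm (W w)).
  exact/measurable_enorm/(mx_measurable_comp (measurable_id_g_sigma Gm) mW).
have -> : (\int[P]_w ((enorm ((1%:M - eta *: A (X w)) *m W w)) `^ p)%:E
    = \int[P]_w \int[mu]_z phi (z, w))%E := integral_indep mX GI GT Gm X_indep mphi phi0.
rewrite -ge0_integralZl_EFin ?powR_ge0 //; last 2 first.
- by move=> w _; rewrite lee_fin powR_ge0.
- exact: measurable_powR_EFin.
apply: ge0_le_integral => //.
- by move=> w _; apply: integral_ge0 => z _.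
- exact: measurableT_comp (@measurable_fun_fubini_tonelli_G _ _ _ _ _ mu phi mphi phi0)
    (measurable_id_g_sigma Gm).
- apply/measurable_EFinP; apply: measurable_funM (measurable_cst _) _.
  exact: measurableT_comp (measurable_powR p) m_normW.
move=> w _; rewrite -EFinM -powRM ?enorm_ge0 //.
have /(Lpnorm_le_EFin _ p1) := contr (W w); apply.
by rewrite mulr_ge0 ?enorm_ge0.
Qed.

Lemma Lpnorm_indep_step (W : OmG -> 'cV[R]_d) : mx_measurable W ->
  (Lpnorm P p (fun w : Om => enorm ((1%:M - eta *: A (X w)) *m W w))
    <= (1 - eta * a)%:E * Lpnorm P p (fun w : Om => enorm (W w)))%E.
Proof. by move=> mW; apply: Lpnorm_le_scale => //; exact: integral_indep_step. Qed.

End independent_step.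

Section Gamma_measurable.
Context {R : realType} {d N : nat} {dT : measure_display} {T : measurableType dT}.
Context {dZ : measure_display} {TZ : measurableType dZ}.
Variables (A : 'I_N -> TZ -> 'M[R]_d) (eta : nat -> R) (H : nat -> nat).
Variable Zf : 'I_N -> nat -> nat -> T -> TZ.
Hypothesis mA : forall c, mx_measurable (A c).

Lemma mx_measurable_local_prod c s h :
  (forall k, (1 <= k <= h)%N -> measurable_fun setT (Zf c s k)) ->
  mx_measurable (fun w => lprod h (fun k => 1%:M - eta s *: A c (Zf c s k w))).
Proof.
move=> mZ; apply: mx_measurable_lprod => k hk.
exact: mx_measurable_comp (mZ k hk) (mx_measurable_step (mA c) (eta s)).
Qed.

Lemma mx_measurable_Gamma_avg s :
  (forall c h, (1 <= h <= H s)%N -> measurable_fun setT (Zf c s h)) ->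
  mx_measurable (Gamma_avg A eta H Zf s).
Proof.
move=> mZ; apply: mx_measurableZ (measurable_cst _) _.
by apply: mx_measurable_sum => c; apply: mx_measurable_local_prod => h; exact: mZ.
Qed.

Lemma mx_measurable_Gamma_prod t :
  (forall c s h, (1 <= s <= t)%N -> (1 <= h <= H s)%N -> measurable_fun setT (Zf c s h)) ->
  mx_measurable (fun w => lprod t (fun s => Gamma_avg A eta H Zf s w)).
Proof.
move=> mZ; apply: mx_measurable_lprod => s hs.
by apply: mx_measurable_Gamma_avg => c h; exact: mZ.
Qed.

End Gamma_measurable.

Section earlier_samples.
Context {N : nat} {dZ : measure_display} {TZ : measurableType dZ}.
Context {dO : measure_display} {Om : measurableType dO}.
Variables (H : nat -> nat) (Z : 'I_N -> nat -> nat -> Om -> TZ).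

Definition sample (i : 'I_N * nat * nat) : Om -> TZ := Z i.1.1 i.1.2 i.2.

Definition valid_index (i : 'I_N * nat * nat) : Prop :=
  (1 <= i.1.2)%N /\ (1 <= i.2 <= H i.1.2)%N.

(* The samples drawn before the (h+1)-th local step of client c in round s. *)
Definition earlier (s : nat) (c : 'I_N) (h : nat) (i : 'I_N * nat * nat) : bool :=
  ((0 < i.1.2 < s)%N && (0 < i.2 <= H i.1.2)%N) ||
  [&& i.1.1 == c, i.1.2 == s & (0 < i.2 <= h)%N].

Definition earlier_samples s c h : seq ('I_N * nat * nat) :=
  undup [seq i <- [seq (cs, h') | cs <- [seq (c', s') | c' <- enum 'I_N, s' <- iota 0 s.+1],
                                   h' <- iota 0 (H cs.2).+1] | earlier s c h i].

Lemma mem_earlier_samples s c h i : (h <= H s)%N ->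
  (i \in earlier_samples s c h) = earlier s c h i.
Proof.
move=> hH; rewrite mem_undup mem_filter; case Ei: (earlier s c h i) => //.
case: i Ei => [[c' s'] h'] Ei.
have [s's h'H] : (s' <= s)%N /\ (h' <= H s')%N.
  move: Ei; rewrite /earlier /=.
  case/orP => [/andP[/andP[_ ss'] /andP[_ h'H]] | /and3P[_ /eqP-> /andP[_ h'h]]].
  - by split => //; exact: ltnW.
  - by split => //; exact: leq_trans h'h hH.
apply/allpairsPdep; exists (c', s'), h'; split => //; last by rewrite mem_iota ltnS.
apply/allpairsPdep; exists c', s'; split => //; first by rewrite mem_enum.
by rewrite mem_iota ltnS.
Qed.

Lemma earlier_valid s c h i : (1 <= s)%N -> (h <= H s)%N ->
  earlier s c h i -> valid_index i.
Proof.
move=> s1 hH /orP[/andP[/andP[s0 _] hi] | /and3P[_ /eqP Es /andP[h0 h'h]]] //.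
by rewrite /valid_index Es; split => //; rewrite h0 (leq_trans h'h hH).
Qed.

Lemma bigcap_sample (l : seq ('I_N * nat * nat)) (B : 'I_N * nat * nat -> set TZ) :
  \big[setI/setT]_(i <- l) (sample i @^-1` B i)
  = [set w | forall i, i \in l -> B i (sample i w)].
Proof.
elim: l => [|j l IH].
  by rewrite big_nil; apply/seteqP; split => w //= _ i; rewrite in_nil.
rewrite big_cons IH; apply/seteqP; split => w /=.
  by move=> [Bj Bl] i; rewrite in_cons => /orP[/eqP-> // | /Bl].
by move=> Bw; split => [|i il]; apply: Bw; rewrite ?mem_head // in_cons il orbT.
Qed.

Definition earlier_events s c h : set (set Om) :=
  [set E | exists B : 'I_N * nat * nat -> set TZ, (forall i, measurable (B i)) /\
     E = [set w | forall i, i \in earlier_samples s c h -> B i (sample i w)]].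

Lemma earlier_events_setI s c h : setI_closed (earlier_events s c h).
Proof.
move=> E1 E2 [B1 [mB1 ->]] [B2 [mB2 ->]].
exists (fun i => B1 i `&` B2 i); split; first by move=> i; exact: measurableI.
apply/seteqP; split => w /=; first by move=> [E1w E2w] i il; split; [exact: E1w | exact: E2w].
by move=> Ew; split => i il; have [] := Ew i il.
Qed.

Lemma earlier_events_setT s c h : earlier_events s c h setT.
Proof.
exists (fun _ => setT); split; first by move=> _; exact: measurableT.
by apply/seteqP; split => w.
Qed.

Lemma measurable_earlier_events s c h E :
  (forall i, valid_index i -> measurable_fun setT (sample i)) ->
  (1 <= s)%N -> (h <= H s)%N ->
  earlier_events s c h E -> measurable E.
Proof.
move=> mZ s1 hH [B [mB ->]]; rewrite -bigcap_sample big_seq.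
apply: big_ind => //; first exact: measurableI.
move=> i; rewrite mem_earlier_samples // => /(earlier_valid s1 hH) /mZ mi.
by rewrite -[X in measurable X]setTI; exact: mi.
Qed.

Lemma measurable_sample_earlier s c h i : i \in earlier_samples s c h ->
  measurable_fun (T := g_sigma_algebraType (earlier_events s c h)) setT (sample i).
Proof.
move=> il _ B mB; rewrite setTI; apply: sub_sigma_algebra.
exists (fun j => if j == i then B else setT); split.
  by move=> j; case: ifP => _ //; exact: measurableT.
apply/seteqP; split => w /=; first by move=> Bw j _; case: ifP => [/eqP-> |].
by move=> /(_ i il); rewrite eqxx.
Qed.

End earlier_samples.

Section transient.
Context {R : realType} {N d : nat} {dZ : measure_display} {TZ : measurableType dZ}.
Context {dO : measure_display} {Om : measurableType dO}.
Variables (pi : 'I_N -> probability TZ R) (A : 'I_N -> TZ -> 'M[R]_d).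
Variables (P : probability Om R) (H : nat -> nat) (Z : 'I_N -> nat -> nat -> Om -> TZ).
Variables (p a : R) (eta : nat -> R) (u : 'cV[R]_d).
Hypotheses (hN : (0 < N)%N) (mA : forall c, mx_measurable (A c)) (p1 : 1 <= p).
Hypothesis mZ : forall c s h, (1 <= s)%N -> (1 <= h <= H s)%N ->
  measurable_fun setT (Z c s h).
Hypothesis Z_law : forall c s h, (1 <= s)%N -> (1 <= h <= H s)%N ->
  forall B, measurable B -> P (Z c s h @^-1` B) = pi c B.
Hypothesis Z_indep : mutually_independent P (valid_index H) (sample Z).
Hypothesis contr : forall c s, (1 <= s)%N -> Lp_contraction (pi c) (A c) p a (eta s).
Hypothesis rate0 : forall s, (1 <= s)%N -> 0 <= 1 - eta s * a.

Let mZ_valid i : valid_index H i -> measurable_fun setT (sample Z i).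
Proof. by case: i => [[c s] h] [s1 h1]; exact: mZ. Qed.

Lemma sample_indep_earlier s c h B E : (1 <= s)%N -> (h < H s)%N ->
  measurable B -> earlier_events H Z s c h E ->
  P (Z c s h.+1 @^-1` B `&` E) = (pi c B * P E)%E.
Proof.
move=> s1 hs mB [Bs [mBs ->]]; have hH := ltnW hs.
set L := earlier_samples H s c h; set i0 := (c, s, h.+1).
have i0L : i0 \notin L by rewrite mem_earlier_samples // /earlier /= !ltnn !andbF.
have L_valid i : i \in L -> valid_index H i.
  by rewrite mem_earlier_samples //; exact: earlier_valid.
have i0L_valid i : i \in i0 :: L -> valid_index H i.
  by rewrite in_cons => /predU1P[-> | /L_valid //]; split => //; rewrite hs.
pose B' i := if i == i0 then B else Bs i.
have mB' i : measurable (B' i) by rewrite /B'; case: ifP.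
have B'L i : i \in L -> B' i = Bs i.
  by move=> iL; rewrite /B'; case: eqP => // ei; move: i0L; rewrite -ei iL.
have -> : Z c s h.+1 @^-1` B `&` [set w | forall i, i \in L -> Bs i (sample Z i w)]
    = \big[setI/setT]_(i <- i0 :: L) (sample Z i @^-1` B' i).
  rewrite big_cons big_seq (eq_bigr (fun i => sample Z i @^-1` Bs i)); last first.
    by move=> i iL; rewrite B'L.
  by rewrite -big_seq bigcap_sample /B' eqxx.
rewrite -bigcap_sample Z_indep ?cons_uniq ?i0L ?undup_uniq // big_cons.
have -> : (\prod_(i <- L) P (sample Z i @^-1` B' i))%E
    = P (\big[setI/setT]_(i <- L) (sample Z i @^-1` Bs i)).
  by rewrite Z_indep ?undup_uniq //; apply: eq_big_seq => i iL; rewrite B'L.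
by congr (_ * _)%E; rewrite /B' eqxx; apply: Z_law; rewrite ?hs.
Qed.

Definition theta_tr t w := lprod t (fun s => Gamma_avg A eta H Z s w) *m u.

Local Notation local_prod c s h w :=
  (lprod h (fun k => 1%:M - eta s *: A c (Z c s k w))).

Lemma mx_measurable_theta_tr t : mx_measurable (theta_tr t).
Proof.
apply: mx_measurableM _ (mx_measurable_cst _).
by apply: (mx_measurable_Gamma_prod eta mA) => c s h /andP[s1 _]; exact: mZ.
Qed.

Lemma mx_measurable_theta_tr_earlier t c h : (h <= H t.+1)%N ->
  mx_measurable (T := g_sigma_algebraType (earlier_events H Z t.+1 c h))
    (fun w => local_prod c t.+1 h w *m theta_tr t w).
Proof.
move=> hH; pose OmG := g_sigma_algebraType (earlier_events H Z t.+1 c h).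
have m_earlier i : earlier H t.+1 c h i -> measurable_fun (T := OmG) setT (sample Z i).
  by rewrite -mem_earlier_samples //; exact: measurable_sample_earlier.
have m_local k : (1 <= k <= h)%N -> measurable_fun (T := OmG) setT (Z c t.+1 k).
  by move=> /andP[k1 kh]; apply: (m_earlier (c, t.+1, k)); rewrite /earlier /= !eqxx k1 kh orbT.
have m_past c' s' h' : (1 <= s' <= t)%N -> (1 <= h' <= H s')%N ->
    measurable_fun (T := OmG) setT (Z c' s' h').
  move=> /andP[s1 st] /andP[h1 hH'].
  by apply: (m_earlier (c', s', h')); rewrite /earlier /= s1 ltnS st h1 hH'.
apply: mx_measurableM; first exact: (mx_measurable_local_prod eta mA m_local).
exact: mx_measurableM (mx_measurable_Gamma_prod eta mA m_past) (mx_measurable_cst _).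
Qed.

Lemma Lpnorm_local_prod t c h : (h <= H t.+1)%N ->
  (Lpnorm P p (fun w => enorm (local_prod c t.+1 h w *m theta_tr t w))
   <= ((1 - eta t.+1 * a) ^+ h)%:E * Lpnorm P p (fun w => enorm (theta_tr t w)))%E.
Proof.
elim: h => [|h IH] hs.
  by rewrite expr0 mul1e; under eq_fun do rewrite mul1mx.
have hH := ltnW hs; have s1 := ltn0Sn t.
under eq_fun do rewrite [lprod _ _]/= -mulmxA.
have step := Lpnorm_indep_step (mA c) p1 (contr c s1) (rate0 s1)
  (mZ c s1 (hs : (1 <= h.+1 <= H t.+1)%N)) (@earlier_events_setI _ _ _ _ _ H Z t.+1 c h)
  (earlier_events_setT H Z t.+1 c h) (fun E => measurable_earlier_events mZ_valid s1 hH)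
  (fun B E mB => sample_indep_earlier s1 hs mB) (mx_measurable_theta_tr_earlier hH).
apply: le_trans step _.
by rewrite exprS EFinM -muleA lee_wpmul2l ?lee_fin ?exprn_ge0 ?rate0 ?IH.
Qed.

Lemma enorm_theta_tr_succ t w : enorm (theta_tr t.+1 w)
  <= \sum_(c < N) N%:R^-1 * enorm (Gamma_c A eta H Z c t.+1 w *m theta_tr t w).
Proof.
rewrite /theta_tr /= -mulmxA /Gamma_avg -scalemxAl mulmx_suml enormZ.
by rewrite ger0_norm ?invr_ge0 // -mulr_sumr ler_wpM2l ?invr_ge0 ?enorm_sum.
Qed.

Lemma Lpnorm_theta_tr_succ t K :
  (Lpnorm P p (fun w => enorm (theta_tr t w)) <= K%:E)%E ->
  (Lpnorm P p (fun w => enorm (theta_tr t.+1 w)) <= ((1 - eta t.+1 * a) ^+ H t.+1 * K)%:E)%E.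
Proof.
move=> le_K; have N0 : 0 <= N%:R^-1 :> R by rewrite invr_ge0.
pose x := (1 - eta t.+1 * a) ^+ H t.+1 * K.
pose term c w := N%:R^-1 * enorm (Gamma_c A eta H Z c t.+1 w *m theta_tr t w).
have m_run c : measurable_fun setT
    (fun w => enorm (Gamma_c A eta H Z c t.+1 w *m theta_tr t w)).
  apply/measurable_enorm/mx_measurableM/mx_measurable_theta_tr.
  by apply: (mx_measurable_local_prod eta mA) => h; exact: mZ.
have m_term c : measurable_fun setT (term c) by exact: measurable_funM.
have term0 c w : 0 <= term c w by rewrite mulr_ge0 ?enorm_ge0.
have term_le c : (Lpnorm P p (term c) <= (N%:R^-1 * x)%:E)%E.
  rewrite Lpnorm_Z // => [|w]; last exact: enorm_ge0.
  rewrite EFinM lee_wpmul2l ?lee_fin //; apply: le_trans (Lpnorm_local_prod _ _) _ => //.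
  by rewrite /x EFinM lee_wpmul2l ?lee_fin ?exprn_ge0 ?rate0.
have split_clients w : 0 <= enorm (theta_tr t.+1 w) <= \sum_(c < N) term c w.
  by rewrite enorm_ge0 enorm_theta_tr_succ.
apply: le_trans (Lpnorm_le P p1 (measurable_enorm (mx_measurable_theta_tr _))
  (measurable_sum _ m_term) split_clients) _.
apply: le_trans (Lpnorm_sum P p1 _ m_term term0) _.
apply: le_trans; first by apply: lee_sum => c _; exact: term_le.
rewrite sumEFin sumr_const card_ord -(mulr_natl (N%:R^-1 * x)) mulrA.
by rewrite mulfV ?pnatr_eq0 -?lt0n // mul1r.
Qed.

Lemma Lpnorm_theta_tr t : (Lpnorm P p (fun w => enorm (theta_tr t w))
  <= ((\prod_(1 <= s < t.+1) (1 - eta s * a) ^+ H s) * enorm u)%:E)%E.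
Proof.
elim: t => [|t IH].
  rewrite big_geq // mul1r -(Lpnorm_cst P (lt_le_trans ltr01 p1) (enorm_ge0 u)).
  by under eq_fun do rewrite /theta_tr mul1mx.
by rewrite big_nat_recr //= mulrAC mulrC; exact: Lpnorm_theta_tr_succ.
Qed.

End transient.

Lemma exprn_le_expR {R : realType} (x : R) n : 0 <= 1 + x -> (1 + x) ^+ n <= expR (n%:R * x).
Proof.
by move=> x1; rewrite expRM_natl lerXn2r ?nnegrE ?expR_ge0 ?expR_ge1Dx.
Qed.

Theorem lemma6
  (R : realType) (N d : nat) (hN : (0 < N)%N)
  (dZ : measure_display) (TZ : measurableType dZ)
  (pi : 'I_N -> probability TZ R)
  (A : 'I_N -> TZ -> 'M[R]_d) (b : 'I_N -> TZ -> 'cV[R]_d)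
  (hAmeas : forall c i j, measurable_fun setT (fun z => A c z i j))
  (hbmeas : forall c i, measurable_fun setT (fun z => b c z i ord0))
  (theta_star : 'cV[R]_d)
  (h_star : ((N%:R)^-1 *: \sum_(c < N) Abar (pi c) (A c)) *m theta_star
            = (N%:R)^-1 *: \sum_(c < N) bbar (pi c) (b c))
  (theta_c : 'I_N -> 'cV[R]_d)
  (h_c : forall c, Abar (pi c) (A c) *m theta_c c = bbar (pi c) (b c))
  (p : R) (hp : 1 <= p)
  (* Assumption A1(p) *)
  (a eta_inf : R) (ha : 0 < a) (heta_inf : 0 < eta_inf)
  (haeta : eta_inf * a <= 1 / 2)
  (hHurwitz : forall c, hurwitz (- Abar (pi c) (A c)))
  (hA1 : forall (c : 'I_N) (eta : R), 0 < eta < eta_inf ->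
     forall u : 'cV[R]_d,
     (((\int[pi c]_z ((enorm ((1%:M - eta *: A c z) *m u)) `^ p)%:E) `^ (p^-1))
        <= ((1 - eta * a) * enorm u)%:E)%E)
  (* Assumption A2: boundedness *)
  (heps : exists M : R, forall c z,
     enorm ((A c z - Abar (pi c) (A c)) *m theta_c c
            - (b c z - bbar (pi c) (b c))) <= M)
  (hAbnd : exists M : R, forall c z (u : 'cV[R]_d),
     enorm (A c z *m u) <= M * enorm u /\
     enorm ((A c z - Abar (pi c) (A c)) *m u) <= M * enorm u)
  (* Assumption A2: samples *)
  (dO : measure_display) (Omega : measurableType dO) (P : probability Omega R)
  (H : nat -> nat)
  (Z : 'I_N -> nat -> nat -> Omega -> TZ)
  (hZmeas : forall c s h, (1 <= s)%N -> (1 <= h <= H s)%N ->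
     measurable_fun setT (Z c s h))
  (hZdist : forall c s h, (1 <= s)%N -> (1 <= h <= H s)%N ->
     forall B : set TZ, measurable B ->
     P (Z c s h @^-1` B)%classic = pi c B)
  (hZind : mutually_independent P
     (fun i : 'I_N * nat * nat => (1 <= i.1.2)%N /\ (1 <= i.2 <= H i.1.2)%N)
     (fun i => Z i.1.1 i.1.2 i.2))
  (* step sizes *)
  (eta : nat -> R) (heta : forall s, (1 <= s)%N -> 0 < eta s <= eta_inf)
  (theta0 : 'cV[R]_d) (t : nat) (ht : (1 <= t)%N) :
  (((\int[P]_w ((enorm (lprod t (fun s => Gamma_avg A eta H Z s w)
                        *m (theta0 - theta_star))) `^ p)%:E) `^ (p^-1))
    <= (expR (- a * \sum_(1 <= s < t.+1) eta s * (H s)%:R)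
        * enorm (theta0 - theta_star))%:E)%E.
Proof.
have [M AM] := hAbnd.
have rate0 s : (1 <= s)%N -> 0 <= 1 - eta s * a.
  move=> /heta /andP[_ le_eta]; have : eta s * a <= eta_inf * a by rewrite ler_pM2r.
  by move: haeta; lra.
have contr c s : (1 <= s)%N -> Lp_contraction (pi c) (A c) p a (eta s).
  have A1c : forall eta, 0 < eta < eta_inf -> Lp_contraction (pi c) (A c) p a eta := hA1 c.
  have AMc z v : enorm (A c z *m v) <= M * enorm v by case: (AM c z v).
  by move=> /heta; exact: (Lp_contraction_closed (hAmeas c) hp AMc A1c).
apply: le_trans (Lpnorm_theta_tr (theta0 - theta_star) hN hAmeas hp hZmeas hZdist hZind
  contr rate0 t) _.
rewrite lee_fin ler_wpM2r ?enorm_ge0 // mulr_sumr expR_sum big_nat_cond.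
rewrite [leRHS]big_nat_cond; apply: ler_prod => s /andP[/andP[s1 _] _].
rewrite exprn_ge0 ?rate0 //= (_ : - a * _ = (H s)%:R * - (eta s * a)); last by ring.
by rewrite exprn_le_expR ?rate0.
Qed.
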